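(* In every state $\mathbf{x}$ of the common-chunk-protocol Markov process (with $k\ge 2$ chunks and any arrival rate $\lambda>0$), the total download rate satisfies \[ r \;\ge\; \frac{S\, r_0^2}{6k^2}, \qquad\text{where } r_0=\sum_{i=1}^k dS_i^+ . \]
   Context: Model: Fix an integer $k\ge 2$ (number of chunks of a file) and $\lambda>0$. There is always exactly one seed holding all $k$ chunks. Non-seed peers arrive according to a Poisson process of rate $\lambda$, each arriving with no chunks; each non-seed peer holds a subset (its profile) of $\{1,\dots,k\}$ and leaves the system immediately once it holds all $k$ chunks. The state $\mathbf{x}$ of the continuous-time Markov process is the number of non-seed peers with each profile. $S$ denotes the total number of peers present, including the seed. Each non-seed peer has an independent rate-1 Poisson clock; at each tick it draws a sample of peers independently and uniformly at random with replacement from the current $S$ peers (seed and itself included) and may instantaneously download at most one chunk that it lacks and that is held by some sampled peer (such a chunk is a ''match''). Counting draws with multiplicity, a chunk is ''rare'' in a sample of 3 draws if exactly one of the 3 draws holds it. Common chunk protocol: (i) a peer with no chunks draws 3 peers and downloads a chunk chosen uniformly among the rare matches, if there is any, otherwise nothing; (ii) a peer holding at least 1 and at most $k-2$ chunks draws 1 peer and downloads a uniformly chosen match, if any, otherwise nothing; (iii) a peer holding exactly $k-1$ chunks draws 3 peers and downloads its missing chunk only if that chunk is held by some draw and every chunk it holds is held by at least 2 of the 3 draws; otherwise nothing. Notation: $S_i$ ($1\le i\le k$) is the number of peers, including the seed, holding chunk $i$; $S_0$ is the number of peers holding no chunks; $\bar S_i=S-S_i$; $\bar T_i$ is the number of peers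 whose profile is exactly $\{1,\dots,k\}\setminus\{i\}$. $r=r(\mathbf{x})$ is the total rate of download events in state $\mathbf{x}$, i.e. the sum over all non-seed peers of the probability that a clock tick of that peer results in a download. $dS_i^+=dS_i^+(\mathbf{x})$ is the probability that a clock tick of a peer holding no chunks results in that peer downloading chunk $i$. *)

From HB Require Import structures.
From mathcomp Require Import all_boot all_order all_algebra.
Set Implicit Arguments. Unset Strict Implicit. Unset Printing Implicit Defensive.
Import Order.TTheory GRing.Theory Num.Theory.
Local Open Scope ring_scope.

(* A state x gives, for each profile A : {set 'I_k} (chunks are 'I_k),
   the number x A of non-seed peers with profile A.
   The population seen by a draw also contains the seed, whose profile is setT. *)

Definition cnt (k : nat) (x : {set 'I_k} -> nat) (B : {set 'I_k}) : nat :=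
  (x B + (B == setT))%N.

Definition Stot (k : nat) (x : {set 'I_k} -> nat) : nat :=
  (\sum_(B : {set 'I_k}) cnt x B)%N.

Definition nd (k : nat) (j : 'I_k) (B1 B2 B3 : {set 'I_k}) : nat :=
  ((j \in B1) + (j \in B2) + (j \in B3))%N.

Definition rareset (k : nat) (B1 B2 B3 : {set 'I_k}) : {set 'I_k} :=
  [set j | nd j B1 B2 B3 == 1%N].

(* probability that 3 independent uniform draws (with replacement) from the
   S peers have profiles B1, B2, B3 in that order *)
Definition triple_prob (R : realFieldType) (k : nat) (x : {set 'I_k} -> nat)
  (B1 B2 B3 : {set 'I_k}) : R :=
  (cnt x B1 * cnt x B2 * cnt x B3)%:R / (Stot x)%:R ^+ 3.

(* dS_i^+ : probability that a tick of an empty peer results in downloading chunk i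
   (chosen uniformly among the rare matches) *)
Definition dSplus (R : realFieldType) (k : nat) (x : {set 'I_k} -> nat) (i : 'I_k) : R :=
  \sum_(B1 : {set 'I_k}) \sum_(B2 : {set 'I_k}) \sum_(B3 : {set 'I_k})
    triple_prob R x B1 B2 B3 *
    (if i \in rareset B1 B2 B3 then (#|rareset B1 B2 B3|%:R)^-1 else 0).

(* download probability of a peer with no chunks: some rare match exists *)
Definition p_empty (R : realFieldType) (k : nat) (x : {set 'I_k} -> nat) : R :=
  \sum_(B1 : {set 'I_k}) \sum_(B2 : {set 'I_k}) \sum_(B3 : {set 'I_k})
    triple_prob R x B1 B2 B3 * (rareset B1 B2 B3 != set0)%:R.

(* download probability of a peer with profile A, 1 <= |A| <= k-2:
   one draw, success iff the drawn peer holds a chunk not in A *)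
Definition p_mid (R : realFieldType) (k : nat) (x : {set 'I_k} -> nat)
  (A : {set 'I_k}) : R :=
  \sum_(B : {set 'I_k}) (cnt x B)%:R / (Stot x)%:R * (~~ (B \subset A))%:R.

(* download probability of a peer with profile A, |A| = k-1: three draws,
   success iff its missing chunk is held by some draw and every chunk of A
   is held by at least 2 of the 3 draws *)
Definition p_last (R : realFieldType) (k : nat) (x : {set 'I_k} -> nat)
  (A : {set 'I_k}) : R :=
  \sum_(B1 : {set 'I_k}) \sum_(B2 : {set 'I_k}) \sum_(B3 : {set 'I_k})
    triple_prob R x B1 B2 B3 *
    ([|| ~~ (B1 \subset A), ~~ (B2 \subset A) | ~~ (B3 \subset A)]
     && [forall j in A, (2 <= nd j B1 B2 B3)%N])%:R.

Definition peer_prob (R : realFieldType) (k : nat) (x : {set 'I_k} -> nat)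
  (A : {set 'I_k}) : R :=
  if A == set0 then p_empty R x
  else if (#|A| <= k - 2)%N then p_mid R x A
  else if #|A| == k.-1 then p_last R x A
  else 0.

Definition rate (R : realFieldType) (k : nat) (x : {set 'I_k} -> nat) : R :=
  \sum_(A : {set 'I_k}) (x A)%:R * peer_prob R x A.

From HB Require Import structures.
From mathcomp Require Import all_boot all_order all_algebra.
From mathcomp Require Import ring lra zify.
Import Order.TTheory GRing.Theory Num.Theory.
Local Open Scope ring_scope.

(* Write w B = cnt x B / S for the probability that one draw has profile B;
   the three draws of a sample are independent, so triple_prob factors as
   w B1 * w B2 * w B3.  Fix the chunk i maximising d = dS_i^+, so r0 <= k d.
   With P the probability that a draw holds i, E = w set0, T = w [set~ i]
   and M the weight of all other profiles lacking i (P + E + M + T = 1):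
   - chunk i is rare in a sample only if exactly one draw holds it, hence
     d <= 3 P (E + M + T)^2;
   - empty peers download with probability >= d, peers lacking i with
     1..k-2 chunks with probability >= P, and peers with profile [set~ i]
     with probability >= 3 P T^2 (one draw holds i, the others are copies
     of [set~ i]), so r >= S (E d + M P + 3 P T^3);
   - an elementary real inequality gives E d + M P + 3 P T^3 >= d^2 / 6.
   Hence r >= S d^2 / 6 >= S r0^2 / (6 k^2). *)

Set Implicit Arguments.
Unset Strict Implicit.

Lemma triple_sum_prod (T : finType) (R : realFieldType) (f1 f2 f3 : T -> R) :
  \sum_a \sum_b \sum_c (f1 a * f2 b * f3 c) =
  (\sum_a f1 a) * (\sum_b f2 b) * (\sum_c f3 c).
Proof.
rewrite -mulrA big_distrl /=; apply: eq_bigr => a _.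
rewrite big_distrl big_distrr /=; apply: eq_bigr => b _.
by rewrite big_distrr big_distrr /=; apply: eq_bigr => c _; rewrite !mulrA.
Qed.

Lemma triple_sumD (T : finType) (R : realFieldType) (f g h : T -> T -> T -> R) :
  \sum_a \sum_b \sum_c (f a b c + g a b c + h a b c) =
  \sum_a \sum_b \sum_c f a b c + \sum_a \sum_b \sum_c g a b c
  + \sum_a \sum_b \sum_c h a b c.
Proof.
rewrite -!big_split /=; apply: eq_bigr => a _.
by rewrite -!big_split /=; apply: eq_bigr => b _; rewrite -!big_split.
Qed.

Lemma ler_triple_sum (T : finType) (R : realFieldType) (f g : T -> T -> T -> R) :
  (forall a b c, f a b c <= g a b c) ->
  \sum_a \sum_b \sum_c f a b c <= \sum_a \sum_b \sum_c g a b c.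
Proof.
move=> fg; apply: ler_sum => a _; apply: ler_sum => b _; apply: ler_sum => c _.
exact: fg.
Qed.

Lemma invn_ge0_le1 (R : realFieldType) (n : nat) :
  0 <= (n%:R : R)^-1 /\ (n%:R : R)^-1 <= 1.
Proof.
split; first by rewrite invr_ge0 ler0n.
by case: n => [|n]; rewrite ?invr0 // invf_le1 ?ltr0Sn // ler1n.
Qed.

Lemma exactly_one_le (R : realFieldType) (w1 w2 w3 v : R) (b1 b2 b3 : bool) :
  0 <= w1 -> 0 <= w2 -> 0 <= w3 -> 0 <= v -> v <= 1 ->
  w1 * w2 * w3 * (if (b1 + b2 + b3 == 1)%N then v else 0) <=
  (w1 * b1%:R) * (w2 * (~~ b2)%:R) * (w3 * (~~ b3)%:R)
  + (w1 * (~~ b1)%:R) * (w2 * b2%:R) * (w3 * (~~ b3)%:R)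
  + (w1 * (~~ b1)%:R) * (w2 * (~~ b2)%:R) * (w3 * b3%:R).
Proof.
move=> h1 h2 h3 hv hv1.
have hw : 0 <= w1 * w2 * w3 by rewrite !mulr_ge0.
by case: b1; case: b2; case: b3 => /=;
  rewrite ?mulr0 ?mulr1 ?mul0r ?addr0 ?add0r ?lexx //; nra.
Qed.

Lemma three_disjoint_le (R : realFieldType) (w1 w2 w3 : R)
    (a1 a2 a3 t1 t2 t3 s : bool) :
  0 <= w1 -> 0 <= w2 -> 0 <= w3 ->
  t1 ==> ~~ a1 -> t2 ==> ~~ a2 -> t3 ==> ~~ a3 ->
  [&& a1, t2 & t3] ==> s -> [&& t1, a2 & t3] ==> s -> [&& t1, t2 & a3] ==> s ->
  (w1 * a1%:R) * (w2 * t2%:R) * (w3 * t3%:R)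
  + (w1 * t1%:R) * (w2 * a2%:R) * (w3 * t3%:R)
  + (w1 * t1%:R) * (w2 * t2%:R) * (w3 * a3%:R) <= w1 * w2 * w3 * s%:R.
Proof.
move=> h1 h2 h3.
have hw : 0 <= w1 * w2 * w3 by rewrite !mulr_ge0.
by case: a1; case: a2; case: a3; case: t1; case: t2; case: t3; case: s => //=;
  rewrite ?mulr0 ?mulr1 ?mul0r ?addr0 ?add0r ?lexx.
Qed.

(* The elementary inequality behind the lemma: if P + E + M + T = 1 and
   0 <= d <= 3 P (E + M + T)^2 then E d + M P + 3 P T^3 >= d^2 / 6.
   Setting s = 1 - P one has 4 P s <= 1, so d^2 <= 3/4 d s; it then suffices
   that d s <= 8 (E d + M P + 3 P T^3), split on T <= E + M or not. *)
Lemma rate_polynomial_bound (R : realFieldType) (P E M T d : R) :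
  0 <= P -> 0 <= E -> 0 <= M -> 0 <= T -> 0 <= d ->
  P + E + M + T = 1 -> d <= 3 * P * (E + M + T) ^+ 2 ->
  d ^+ 2 / 6 <= E * d + M * P + 3 * P * T ^+ 3.
Proof.
move=> hP hE hM hT hd hsum hdb.
set s := E + M + T in hdb *.
have hPs : P + s = 1 by rewrite /s; lra.
have hsd : s = E + M + T by [].
clearbody s.
have hs0 : 0 <= s by rewrite hsd; lra.
have hs1 : s <= 1 by lra.
have amgm : 4 * P * s <= 1.
  have := sqr_ge0 (1 - 2 * s).
  have -> : P = 1 - s by lra.
  by rewrite expr2; nra.
have d2_le : d ^+ 2 <= 3 / 4 * d * s.
  have := ler_wpM2l hd hdb.
  have : d * s * (4 * P * s) <= d * s * 1 by apply: ler_wpM2l => //; exact: mulr_ge0.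
  by rewrite expr2; nra.
suff : d * s <= 8 * E * d + 8 * M * P + 24 * P * T ^+ 3 by nra.
have hdM : d * M <= 3 * P * M.
  have := ler_wpM2r hM hdb.
  have : P * M * s ^+ 2 <= P * M * 1.
    by apply: ler_wpM2l; [exact: mulr_ge0 | rewrite expr2; nra].
  by nra.
have [hTEM | hTEM] := lerP T (E + M).
  have : d * T <= d * (E + M) by apply: ler_wpM2l.
  have := mulr_ge0 hP (exprn_ge0 3 hT).
  have := mulr_ge0 hE hd.
  by rewrite hsd; nra.
have hs2 : s ^+ 2 <= 4 * T ^+ 2 by rewrite hsd !expr2; nra.
have : d * T <= 3 * P * s ^+ 2 * T by apply: ler_wpM2r.
have : P * T * s ^+ 2 <= P * T * (4 * T ^+ 2) by apply: ler_wpM2l => //; exact: mulr_ge0.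
have -> : d * s = d * (E + M) + d * T by rewrite hsd; ring.
by nra.
Qed.

Section CommonChunkRate.

Variables (R : realFieldType) (k : nat) (x : {set 'I_k} -> nat).

Local Notation SR := ((Stot x)%:R : R).

Definition draw_prob (B : {set 'I_k}) : R := (cnt x B)%:R / SR.

Definition holds_prob (i : 'I_k) : R := \sum_B draw_prob B * (i \in B)%:R.

(* Profiles lacking chunk i other than set0 and [set~ i]: exactly the
   profiles of peers lacking i that follow rule (ii) of the protocol. *)
Definition middle_profile (i : 'I_k) (B : {set 'I_k}) : bool :=
  [&& i \notin B, B != set0 & B != [set~ i]].

Lemma Stot_gt0 : (0 < Stot x)%N.
Proof. by rewrite /Stot (bigD1 setT) //= /cnt eqxx addn1. Qed.

Lemma SR_neq0 : SR != 0.
Proof. by rewrite pnatr_eq0 -lt0n Stot_gt0. Qed.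

Lemma draw_prob_ge0 B : 0 <= draw_prob B.
Proof. by rewrite /draw_prob divr_ge0. Qed.

Lemma sum_draw_prob : \sum_B draw_prob B = 1.
Proof. by rewrite /draw_prob -big_distrl /= -natr_sum divff // SR_neq0. Qed.

Lemma holds_prob_ge0 (i : 'I_k) : 0 <= holds_prob i.
Proof.
by rewrite /holds_prob; apply: sumr_ge0 => B _; rewrite mulr_ge0 ?draw_prob_ge0.
Qed.

Lemma triple_probE B1 B2 B3 :
  triple_prob R x B1 B2 B3 = draw_prob B1 * draw_prob B2 * draw_prob B3.
Proof. by rewrite /triple_prob /draw_prob !natrM -exprVn; ring. Qed.

Lemma triple_prob_ge0 B1 B2 B3 : 0 <= triple_prob R x B1 B2 B3.
Proof.
by rewrite triple_probE; apply: mulr_ge0; [apply: mulr_ge0|]; exact: draw_prob_ge0.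
Qed.

Lemma dSplus_ge0 (i : 'I_k) : 0 <= dSplus R x i.
Proof.
apply: sumr_ge0 => B1 _; apply: sumr_ge0 => B2 _; apply: sumr_ge0 => B3 _.
rewrite mulr_ge0 ?triple_prob_ge0 //.
by case: ifP => _ //; case: (invn_ge0_le1 R #|rareset B1 B2 B3|).
Qed.

(* The seed holds every chunk, so a profile lacking i is held by non-seed
   peers only and their number is S times its draw probability. *)
Lemma count_lacking (i : 'I_k) (B : {set 'I_k}) :
  i \notin B -> (x B)%:R = SR * draw_prob B.
Proof.
move=> iB; have /negbTE BT : B != setT by apply: contraNneq iB => ->; rewrite inE.
by rewrite /draw_prob /cnt BT addn0 mulrC divfK // SR_neq0.
Qed.

Lemma split_lacking (F : {set 'I_k} -> R) (i : 'I_k) : (2 <= k)%N ->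
  \sum_(B : {set 'I_k} | i \notin B) F B =
  F set0 + F [set~ i] + \sum_(B | middle_profile i B) F B.
Proof.
move=> hk; have T0 : [set~ i] != set0.
  by apply/eqP => T0; have := cardsC1 i; rewrite T0 cards0 card_ord; lia.
rewrite (bigD1 set0) ?inE //= (bigD1 [set~ i]) /= ?inE ?eqxx ?T0 // addrA.
by congr (_ + _); apply: eq_bigl => B; rewrite /middle_profile andbA.
Qed.

(* Chunk i is rare only if exactly one draw holds it:
   dS_i^+ <= 3 P (1 - P)^2. *)
Lemma dSplus_le_rare (i : 'I_k) :
  dSplus R x i <= 3 * holds_prob i * (\sum_B draw_prob B * (i \notin B)%:R) ^+ 2.
Proof.
pose w B b := draw_prob B * b%:R.
apply: (@le_trans _ _ (\sum_B1 \sum_B2 \sum_B3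
    (w B1 (i \in B1) * w B2 (i \notin B2) * w B3 (i \notin B3)
   + w B1 (i \notin B1) * w B2 (i \in B2) * w B3 (i \notin B3)
   + w B1 (i \notin B1) * w B2 (i \notin B2) * w B3 (i \in B3)))).
  apply: ler_triple_sum => B1 B2 B3; rewrite triple_probE /rareset inE /nd.
  case: (invn_ge0_le1 R #|[set j | ((j \in B1) + (j \in B2) + (j \in B3) == 1)%N]|).
  by move=> v0 v1; apply: exactly_one_le; rewrite ?draw_prob_ge0.
rewrite triple_sumD !triple_sum_prod /holds_prob expr2.
by rewrite le_eqVlt; apply/orP; left; apply/eqP; ring.
Qed.

(* An empty peer downloads whenever it downloads chunk i. *)
Lemma dSplus_le_p_empty (i : 'I_k) : dSplus R x i <= p_empty R x.
Proof.
apply: ler_triple_sum => B1 B2 B3; have := triple_prob_ge0 B1 B2 B3.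
case: ifP => rare tp0; last by rewrite mulr0 mulr_ge0.
have -> : rareset B1 B2 B3 != set0 by apply/set0Pn; exists i.
by case: (invn_ge0_le1 R #|rareset B1 B2 B3|) => _ v1; rewrite mulr1 ler_piMr.
Qed.

(* A one-draw peer lacking i succeeds whenever the draw holds i. *)
Lemma holds_prob_le_p_mid (i : 'I_k) (A : {set 'I_k}) :
  i \notin A -> holds_prob i <= p_mid R x A.
Proof.
move=> iA; apply: ler_sum => B _; rewrite -/(draw_prob B).
case iB: (i \in B); last by rewrite mulr0 mulr_ge0 ?draw_prob_ge0.
suff -> : ~~ (B \subset A) by [].
by apply/negP => /subsetP/(_ i iB); rewrite (negbTE iA).
Qed.

Lemma sum_draw_prob_eq T : \sum_B draw_prob B * (B == T)%:R = draw_prob T.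
Proof.
by rewrite (bigD1 T) //= eqxx mulr1 big1 ?addr0 // => B /negbTE ->; rewrite mulr0.
Qed.

(* A peer with profile [set~ i] succeeds when one draw holds i and the two
   others have profile [set~ i]: p_last >= 3 P T^2. *)
Lemma p_last_ge (i : 'I_k) :
  3 * holds_prob i * draw_prob [set~ i] * draw_prob [set~ i]
    <= p_last R x [set~ i].
Proof.
set Ti := [set~ i]; pose w B b := draw_prob B * b%:R.
have iTi : i \notin Ti by rewrite !inE eqxx.
have notT (B : {set 'I_k}) : (B == Ti) ==> (i \notin B) by apply/implyP => /eqP ->.
have nsub (C : {set 'I_k}) : i \in C -> ~~ (C \subset Ti).
  by move=> iC; apply/negP => /subsetP/(_ i iC); rewrite (negbTE iTi).
have twice (C : {set 'I_k}) : [forall j in Ti, [&& (2 <= nd j C Ti Ti)%N,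
                      (2 <= nd j Ti C Ti)%N & (2 <= nd j Ti Ti C)%N]].
  by apply/forallP => j; apply/implyP => jT; rewrite /nd jT; case: (j \in C).
apply: (@le_trans _ _ (\sum_B1 \sum_B2 \sum_B3
    (w B1 (i \in B1) * w B2 (B2 == Ti) * w B3 (B3 == Ti)
   + w B1 (B1 == Ti) * w B2 (i \in B2) * w B3 (B3 == Ti)
   + w B1 (B1 == Ti) * w B2 (B2 == Ti) * w B3 (i \in B3)))); last first.
  apply: ler_triple_sum => B1 B2 B3; rewrite triple_probE.
  apply: three_disjoint_le; rewrite ?draw_prob_ge0 ?notT //; apply/implyP.
  - case/and3P => i1 /eqP-> /eqP->; rewrite nsub //=; apply/forallP => j.
    by apply/implyP => jT; have /forallP/(_ j) := twice B1; rewrite jT => /and3P[].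
  - case/and3P => /eqP-> i2 /eqP->; rewrite (nsub B2) ?orbT //=; apply/forallP => j.
    by apply/implyP => jT; have /forallP/(_ j) := twice B2; rewrite jT => /and3P[].
  - case/and3P => /eqP-> /eqP-> i3; rewrite (nsub B3) ?orbT //=; apply/forallP => j.
    by apply/implyP => jT; have /forallP/(_ j) := twice B3; rewrite jT => /and3P[].
rewrite triple_sumD !triple_sum_prod !sum_draw_prob_eq /holds_prob.
by rewrite le_eqVlt; apply/orP; left; apply/eqP; ring.
Qed.

Lemma peer_prob_ge0 A : 0 <= peer_prob R x A.
Proof.
have triple0 (f : {set 'I_k} -> {set 'I_k} -> {set 'I_k} -> bool) :
    0 <= \sum_B1 \sum_B2 \sum_B3 triple_prob R x B1 B2 B3 * (f B1 B2 B3)%:R.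
  apply: sumr_ge0 => B1 _; apply: sumr_ge0 => B2 _; apply: sumr_ge0 => B3 _.
  by rewrite mulr_ge0 ?triple_prob_ge0.
rewrite /peer_prob; case: ifP => _; first exact: triple0.
case: ifP => _; last by case: ifP => _ //; exact: triple0.
by apply: sumr_ge0 => B _; rewrite mulr_ge0 ?divr_ge0.
Qed.

(* Keeping only the peers lacking i and using the three bounds above:
   r >= S (E d + T (3 P T^2) + M P). *)
Lemma rate_ge_lacking (i : 'I_k) : (2 <= k)%N ->
  SR * (draw_prob set0 * dSplus R x i
        + draw_prob [set~ i]
          * (3 * holds_prob i * draw_prob [set~ i] * draw_prob [set~ i])
        + (\sum_(B | middle_profile i B) draw_prob B) * holds_prob i)
  <= rate R x.
Proof.
move=> hk; rewrite /rate [X in _ <= X](bigID (fun A : {set 'I_k} => i \notin A)) /=.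
rewrite -[X in X <= _]addr0.
apply: lerD; last by apply: sumr_ge0 => A _; rewrite mulr_ge0 ?peer_prob_ge0.
rewrite split_lacking // !mulrDr; apply: lerD; first apply: lerD.
- rewrite (count_lacking (i := i) (B := set0)) ?inE // -[X in _ <= X]mulrA.
  apply: ler_wpM2l => //; apply: ler_wpM2l; first exact: draw_prob_ge0.
  by rewrite /peer_prob eqxx dSplus_le_p_empty.
- have Tcard : #|[set~ i]| = k.-1 by rewrite cardsC1 card_ord.
  have -> : peer_prob R x [set~ i] = p_last R x [set~ i].
    rewrite /peer_prob Tcard eqxx ifF; last first.
      by apply/eqP => T0; move: Tcard; rewrite T0 cards0; lia.
    by rewrite ifF //; apply/negbTE; rewrite -ltnNge; lia.
  rewrite (count_lacking (i := i) (B := [set~ i])) ?inE ?eqxx // -[X in _ <= X]mulrA.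
  apply: ler_wpM2l => //; apply: ler_wpM2l; first exact: draw_prob_ge0.
  exact: p_last_ge.
- rewrite big_distrl big_distrr /=; apply: ler_sum => A /and3P [iA A0 AT].
  rewrite (count_lacking iA) -[X in _ <= X]mulrA.
  apply: ler_wpM2l => //; apply: ler_wpM2l; first exact: draw_prob_ge0.
  have Asub : A \proper [set~ i].
    rewrite properEneq AT; apply/subsetP => j jA; rewrite !inE.
    by apply: contraNneq iA => <-.
  have Acard : (#|A| <= k - 2)%N.
    by have := proper_card Asub; rewrite cardsC1 card_ord; lia.
  by rewrite /peer_prob (negbTE A0) Acard holds_prob_le_p_mid.
Qed.

Lemma rate_ge_dSplus (i : 'I_k) :
  (2 <= k)%N -> SR * (dSplus R x i ^+ 2 / 6) <= rate R x.
Proof.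
move=> hk; apply: le_trans (rate_ge_lacking i hk).
set P := holds_prob i; set E := draw_prob set0; set T := draw_prob [set~ i].
set M := \sum_(B | middle_profile i B) draw_prob B; set d := dSplus R x i.
have M0 : 0 <= M by apply: sumr_ge0 => B _; exact: draw_prob_ge0.
have lacking : \sum_B draw_prob B * (i \notin B)%:R = E + T + M.
  rewrite -split_lacking // [RHS]big_mkcond /=; apply: eq_bigr => B _.
  by case: (i \notin B); rewrite ?mulr1 ?mulr0.
have total : P + (E + T + M) = 1.
  rewrite -lacking -[RHS]sum_draw_prob -big_split /=; apply: eq_bigr => B _.
  by case: (i \in B); rewrite /= ?mulr1 ?mulr0 ?addr0 ?add0r.
have rare : d <= 3 * P * (E + M + T) ^+ 2.
  by rewrite (addrAC E) -lacking; exact: dSplus_le_rare.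
have total' : P + E + M + T = 1 by lra.
have := rate_polynomial_bound (holds_prob_ge0 i) (draw_prob_ge0 set0) M0
          (draw_prob_ge0 [set~ i]) (dSplus_ge0 i) total' rare.
have -> : E * d + T * (3 * P * T * T) + M * P = E * d + M * P + 3 * P * T ^+ 3.
  by ring.
exact: ler_wpM2l.
Qed.

End CommonChunkRate.

Theorem lemma1 (R : realFieldType) (k : nat) (lambda : R)
  (hk : (2 <= k)%N) (hlambda : 0 < lambda)
  (x : {set 'I_k} -> nat) (hx : x setT = 0%N) :
  (Stot x)%:R * (\sum_(i < k) dSplus R x i) ^+ 2 / (6 * k ^ 2)%:R
    <= rate R x.
Proof.
have k0 : (0 < k)%N by lia.
have [i _ dmax] := @arg_maxP _ R 'I_k (Ordinal k0) xpredT (dSplus R x) isT.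
set d := dSplus R x i; set r0 := \sum_(j < k) dSplus R x j.
have r0_le : r0 <= k%:R * d.
  have -> : k%:R * d = \sum_(j < k) d by rewrite sumr_const card_ord mulr_natl.
  by apply: ler_sum => j _; exact: dmax.
have r0_ge0 : 0 <= r0 by apply: sumr_ge0 => j _; exact: dSplus_ge0.
have S0 : 0 < ((Stot x)%:R : R) by rewrite ltr0n Stot_gt0.
have kR : 0 < (k%:R : R) by rewrite ltr0n.
apply: le_trans (rate_ge_dSplus R x i hk); rewrite natrM natrX.
rewrite ler_pdivrMr ?mulr_gt0 ?exprn_gt0 //.
have -> : (Stot x)%:R * (d ^+ 2 / 6) * (6 * k%:R ^+ 2) = (Stot x)%:R * (k%:R * d) ^+ 2.
  by rewrite exprMn; field.
apply: ler_wpM2l; first exact: ltW.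
by rewrite !expr2; nra.
Qed.
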